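(* Let $\mathcal{P}:=\bigl\{t^n-\sum_{i\in M}t^i: n\ge1,\ 0\in M\subseteq\{j\in\mathbb{N}: j\le\frac{n-1}{2}\}\bigr\}$. Then: (1) for every $n\ge1$, the polynomial $t^n-\sum_{i=0}^{\lfloor(n-1)/2\rfloor}t^i$ has the largest positive root among all polynomials of degree $n$ in $\mathcal{P}$; (2) the polynomials $t^3-t-1$ and $t^5-t^2-t-1=(t^2+1)(t^3-t-1)$ have the largest positive roots among all polynomials in $\mathcal{P}$; i.e. every polynomial in $\mathcal{P}$ has all its positive roots $\le t_P$, where $t_P\approx1.324718$ is the unique real root of $t^3-t-1$.
   Context: Each polynomial in $\mathcal{P}$ takes value $-1$ at $0$ and has a positive root. *)

From HB Require Import structures.
From mathcomp Require Import all_boot all_order all_algebra.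
Set Implicit Arguments. Unset Strict Implicit. Unset Printing Implicit Defensive.
Import Order.TTheory GRing.Theory Num.Theory.
Local Open Scope ring_scope.

(* The polynomial t^n - sum_{i in M} t^i ; M is given as a duplicate-free list. *)
Definition Ppoly (R : nzRingType) (n : nat) (M : seq nat) : {poly R} :=
  'X^n - \sum_(i <- M) 'X^i.

Definition admissible (n : nat) (M : seq nat) : bool :=
  [&& (0 < n)%N, uniq M, 0%N \in M & all (fun j => (j.*2 <= n.-1)%N) M].

(* For t > 0 and k <= n, (1 + t + ... + t^(k-1)) / t^n is strictly decreasing,
   since every exponent i - n in it is negative.  A positive root x of
   t^n - sum_{i in M} t^i with M admissible satisfies x^n <= 1 + ... + x^h,
   h = floor((n-1)/2), because M is a set of exponents at most h; hence x cannot
   exceed the root of t^n - (1 + ... + t^h), where equality holds.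
   For (2): if x > t_P then 1 + x < x^3, and induction on m gives
   1 + x + ... + x^m < x^(2m+1) <= x^n, so x is not a root. *)
From HB Require Import structures.
From mathcomp Require Import all_boot all_order all_algebra zify lra.
Import Order.TTheory GRing.Theory Num.Theory.
Local Open Scope ring_scope.

Section PpolyRoots.

Context {R : comNzRingType}.

Lemma horner_Ppoly n M (x : R) :
  (Ppoly R n M).[x] = x ^+ n - \sum_(i <- M) x ^+ i.
Proof.
rewrite /Ppoly hornerD hornerN hornerXn horner_sum.
by congr (_ - _); apply: eq_bigr => i _; rewrite hornerXn.
Qed.

Lemma root_Ppoly n M (x : R) :
  root (Ppoly R n M) x = (x ^+ n == \sum_(i <- M) x ^+ i).
Proof. by rewrite rootE horner_Ppoly subr_eq0. Qed.

Lemma horner_Ppoly_iota n k (x : R) :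
  (Ppoly R n (iota 0 k)).[x] = x ^+ n - \sum_(i < k) x ^+ i.
Proof. by rewrite horner_Ppoly -(big_mkord xpredT) /index_iota subn0. Qed.

Lemma root_Ppoly_iota n k (x : R) :
  root (Ppoly R n (iota 0 k)) x = (x ^+ n == \sum_(i < k) x ^+ i).
Proof. by rewrite rootE horner_Ppoly_iota subr_eq0. Qed.

Lemma root_Ppoly_cubic (x : R) :
  root (Ppoly R 3 [:: 0; 1]%N) x = (x ^+ 3 == 1 + x).
Proof. by rewrite root_Ppoly !big_cons big_nil expr0 expr1 addr0. Qed.

Lemma root_Ppoly_quintic_of_cubic (x : R) :
  root (Ppoly R 3 [:: 0; 1]%N) x -> root (Ppoly R 5 [:: 0; 1; 2]%N) x.
Proof.
rewrite root_Ppoly_cubic root_Ppoly !big_cons big_nil expr0 expr1 addr0.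
move=> /eqP x3; rewrite (exprD x 2 3) x3 mulrDr mulr1 -exprSr x3.
by rewrite addrC -addrA.
Qed.

End PpolyRoots.

Section GeometricSums.

Context {R : realDomainType}.
Implicit Types x y : R.

Lemma sum_uniq_le_geom x (M : seq nat) k :
  0 <= x -> uniq M -> all (fun j => (j < k)%N) M ->
  \sum_(i <- M) x ^+ i <= \sum_(i < k) x ^+ i.
Proof.
move=> x0 uM /allP Mk; rewrite -(big_mkord xpredT) [X in _ <= X](bigID (mem M)) /=.
apply: ler_wpDr; first by apply: sumr_ge0 => i _; apply: exprn_ge0.
rewrite (perm_big [seq i <- index_iota 0 k | i \in M]) ?big_filter //.
apply: uniq_perm => //; first by rewrite filter_uniq // iota_uniq.
move=> i; rewrite mem_filter mem_iota /= subn0 add0n.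
by case iM: (i \in M) => //=; rewrite (Mk i iM).
Qed.

Lemma geom_lt_expn_above_root [n k : nat] [x y : R] :
  (0 < k)%N -> (k <= n)%N -> 0 < y -> y < x ->
  y ^+ n = \sum_(i < k) y ^+ i -> \sum_(i < k) x ^+ i < x ^+ n.
Proof.
move=> k0 kn y0 yx yn.
have x0 : 0 < x := lt_trans y0 yx.
suff : y ^+ n * \sum_(i < k) x ^+ i < x ^+ n * \sum_(i < k) y ^+ i.
  by rewrite -yn mulrC ltr_pM2r // exprn_gt0.
rewrite !mulr_sumr; apply: ltr_sum.
  by apply/hasP; exists (Ordinal k0); rewrite ?mem_index_enum.
move=> i _; have ilt : (i < n)%N := leq_trans (ltn_ord i) kn.
rewrite -(subnKC (ltnW ilt)) !exprD mulrAC [_ * y ^+ i]mulrAC.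
rewrite [x ^+ i * _]mulrC ltr_pM2l ?mulr_gt0 ?exprn_gt0 //.
by rewrite ltrXn2r ?ltW // subn_eq0 -ltnNge.
Qed.

Lemma one_add_expn_le x m :
  1 <= x -> 1 + x <= x ^+ 3 -> 1 + x ^+ m.+1 <= x ^+ m.+3.
Proof.
move=> x1 x3; have x0 : 0 <= x := le_trans ler01 x1.
apply: (le_trans (y := x ^+ m * (1 + x))).
  by rewrite mulrDr mulr1 -exprSr lerD2r exprn_ege1.
by rewrite -addn3 exprD ler_wpM2l ?exprn_ge0.
Qed.

Lemma geom_lt_odd_expn [x : R] m :
  1 < x -> 1 + x < x ^+ 3 -> \sum_(i < m.+1) x ^+ i < x ^+ m.*2.+1.
Proof.
move=> x1 x3; have x0 : 0 < x := lt_trans ltr01 x1.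
case: m => [|m]; first by rewrite big_ord_recr big_ord0 /= add0r expr0 expr1.
elim: m => [|m IH].
  by rewrite big_ord_recr big_ord_recr big_ord0 /= add0r expr0 expr1.
rewrite big_ord_recr /=.
apply: (lt_le_trans (y := x ^+ m.+1.*2.+1 + x ^+ m.+2)); first by rewrite ltrD2r.
rewrite (_ : m.+1.*2.+1 = m.+2 + m.+1)%N; last by lia.
rewrite (_ : m.+2.*2.+1 = m.+2 + m.+3)%N; last by lia.
rewrite !exprD -[X in _ + X]mulr1 -mulrDr ler_wpM2l ?exprn_ge0 ?(ltW x0) //.
by rewrite addrC one_add_expn_le ?(ltW x1) ?(ltW x3).
Qed.

End GeometricSums.

Lemma admissible_iota_half n : (0 < n)%N -> admissible n (iota 0 ((n.-1)./2).+1).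
Proof.
move=> n0; rewrite /admissible n0 iota_uniq mem_iota /=.
by apply/allP => j; rewrite mem_iota; lia.
Qed.

Section RootBounds.

Context {R : realDomainType}.

Lemma admissible_root_le_geom [n M] [x : R] :
  admissible n M -> 0 < x -> root (Ppoly R n M) x ->
  x ^+ n <= \sum_(i < ((n.-1)./2).+1) x ^+ i.
Proof.
case/and4P=> _ uM _ /allP Mn x0; rewrite root_Ppoly => /eqP ->.
apply: sum_uniq_le_geom; rewrite ?ltW //.
by apply/allP => j /Mn; lia.
Qed.

Lemma admissible_root_le_iota_half_root [n M] [x y : R] :
  admissible n M -> 0 < x -> root (Ppoly R n M) x ->
  0 < y -> root (Ppoly R n (iota 0 ((n.-1)./2).+1)) y -> x <= y.
Proof.
move=> adm x0 rx y0; rewrite root_Ppoly_iota => /eqP yn.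
have n0 : (0 < n)%N by case/and4P: adm.
rewrite leNgt; apply/negP => yx.
have := admissible_root_le_geom adm x0 rx; apply/negP; rewrite -ltNge.
by apply: geom_lt_expn_above_root y0 yx yn; lia.
Qed.

Lemma root_Ppoly_cubic_gt1 [t : R] : root (Ppoly R 3 [:: 0; 1]%N) t -> 1 < t.
Proof.
rewrite root_Ppoly_cubic => /eqP t3; have [t0|t0] := lerP t 0; last by nra.
by have := sqr_ge0 (t + 1); nra.
Qed.

Lemma cubic_lt_above_root [t x : R] :
  root (Ppoly R 3 [:: 0; 1]%N) t -> t < x -> 1 + x < x ^+ 3.
Proof.
move=> rt tx; have t0 := lt_trans ltr01 (root_Ppoly_cubic_gt1 rt).
have geom2 (z : R) : \sum_(i < 2) z ^+ i = 1 + z.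
  by rewrite !big_ord_recr big_ord0 /= add0r expr0 expr1.
rewrite -geom2; apply: geom_lt_expn_above_root t0 tx _ => //.
by rewrite geom2; apply/eqP; rewrite -root_Ppoly_cubic.
Qed.

Lemma root_Ppoly_cubic_uniq [s t : R] :
  root (Ppoly R 3 [:: 0; 1]%N) s -> root (Ppoly R 3 [:: 0; 1]%N) t -> s = t.
Proof.
move=> rs rt; move: (rs) (rt); rewrite !root_Ppoly_cubic => /eqP s3 /eqP t3.
have [st|ts|//] := ltgtP s t.
- by have := cubic_lt_above_root rs st; rewrite t3 ltxx.
- by have := cubic_lt_above_root rt ts; rewrite s3 ltxx.
Qed.

Lemma admissible_root_le_cubic_root [n M] [x t : R] :
  admissible n M -> 0 < x -> root (Ppoly R n M) x ->
  root (Ppoly R 3 [:: 0; 1]%N) t -> x <= t.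
Proof.
move=> adm x0 rx rt; rewrite leNgt; apply/negP => tx.
have n0 : (0 < n)%N by case/and4P: adm.
have x1 : 1 < x := lt_trans (root_Ppoly_cubic_gt1 rt) tx.
have := geom_lt_odd_expn ((n.-1)./2) x1 (cubic_lt_above_root rt tx).
apply/negP; rewrite -leNgt; apply: le_trans (admissible_root_le_geom adm x0 rx).
by rewrite ler_weXn2l ?ltW //; lia.
Qed.

End RootBounds.

Lemma Ppoly_iota_exists_pos_root (R : rcfType) n k : (0 < k)%N -> (k <= n)%N ->
  exists2 y : R, 0 < y & root (Ppoly R n (iota 0 k)) y.
Proof.
move=> k0 kn; have n0 : (0 < n)%N := leq_trans k0 kn.
set p := Ppoly R n (iota 0 k).
have geom_gt0 (x : R) : 0 <= x -> 0 < \sum_(i < k) x ^+ i.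
  move=> x0; rewrite -(prednK k0) big_ord_recl expr0 ltr_pwDl //.
  by apply: sumr_ge0 => i _; rewrite exprn_ge0.
have p0 : p.[0] < 0.
  by rewrite horner_Ppoly_iota expr0n gtn_eqF // sub0r oppr_lt0 geom_gt0.
(* at t = 2 the geometric sum is 2^k - 1 *)
have p2 : 0 <= p.[2].
  rewrite horner_Ppoly_iota subr_ge0.
  have := subrX1 (2 : R) k; rewrite (_ : 2 - 1 = 1 :> R) ?mul1r; last by lra.
  move=> <-; rewrite lerBlDr (le_trans (ler_weXn2l _ kn)) ?ler1n //.
  by rewrite lerDl.
have p02 : p.[0] <= 0 <= p.[2] by rewrite ltW.
have [y /andP [y0 _] ry] := poly_ivt (ler0n R 2) p02.
exists y => //; rewrite lt_neqAle y0 andbT; apply: contraTneq ry => <-.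
by rewrite /root lt_eqF.
Qed.

Theorem lemma5 (R : rcfType) :
  (forall n : nat, (0 < n)%N ->
     admissible n (iota 0 ((n.-1)./2).+1) /\
     exists y : R, 0 < y /\ root (Ppoly R n (iota 0 ((n.-1)./2).+1)) y /\
       forall (M : seq nat) (x : R),
         admissible n M -> 0 < x -> root (Ppoly R n M) x -> x <= y)
  /\
  (admissible 3 [:: 0; 1]%N /\ admissible 5 [:: 0; 1; 2]%N /\
   exists tP : R,
     root (Ppoly R 3 [:: 0; 1]%N) tP /\
     (forall s : R, root (Ppoly R 3 [:: 0; 1]%N) s -> s = tP) /\
     root (Ppoly R 5 [:: 0; 1; 2]%N) tP /\
     forall (n : nat) (M : seq nat) (x : R),
       admissible n M -> 0 < x -> root (Ppoly R n M) x -> x <= tP).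
Proof.
split=> [n n0|].
  have [|y y0 ry] := @Ppoly_iota_exists_pos_root R n ((n.-1)./2).+1 isT; first by lia.
  split; first exact: admissible_iota_half.
  exists y; split=> //; split=> // M x adm x0 rx.
  exact: admissible_root_le_iota_half_root adm x0 rx y0 ry.
have [tP _ rtP] := @Ppoly_iota_exists_pos_root R 3 2 isT isT.
do 2!split=> //; exists tP; split=> //.
split=> [s rs|]; first exact: root_Ppoly_cubic_uniq.
split=> [|n M x adm x0 rx]; first exact: root_Ppoly_quintic_of_cubic.
exact: admissible_root_le_cubic_root adm x0 rx rtP.
Qed.
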